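(* Let $G$ act on a countable set $X$, $R\subseteq G$ a subgroup, and $(b,c)$ a connected graph over $X$ such that $H=H_{b,c}$ is $R$-invariant. Then for all $x,y\in X$ there exists $C_{x,y}>0$ such that $T_gf(x)\ge C_{x,y}\,T_gf(y)$ for every $f\in\mathcal{S}^+$ and every $g\in R$.
   Context: A graph over $X$ is $(b,c)$ with $b:X\times X\to[0,\infty)$, $c:X\to\mathbb{R}$, $\sum_yb(x,y)<\infty$ ($b$ need not be symmetric); connected: any $x,z$ are joined by a finite sequence $y_1,\dots,y_n$ with $b(y_i,y_{i+1})>0$. $H_{b,c}f(x)=\sum_yb(x,y)(f(x)-f(y))+c(x)f(x)$ on $\mathrm{Dom}(H)=\{f:\sum_yb(x,y)|f(y)|<\infty\ \forall x\}$. $\mathcal{S}^+$ is the set of nonnegative, not identically zero $f\in\mathrm{Dom}(H)$ with $Hf\ge0$. $T_gf(x)=f(g^{-1}x)$; $H$ is $R$-invariant if $T_g$ preserves $\mathrm{Dom}(H)$ and $HT_g=T_gH$ for $g\in R$. *)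

From HB Require Import structures.
From mathcomp Require Import all_boot all_order all_algebra.
From mathcomp Require Import all_classical all_reals all_analysis.
Set Implicit Arguments. Unset Strict Implicit. Unset Printing Implicit Defensive.
Import Order.TTheory GRing.Theory Num.Theory.
Local Open Scope classical_set_scope.
Local Open Scope ring_scope.

Record group_action (G X : Type) := GroupAction {
  gmul : G -> G -> G;
  ginv : G -> G;
  gone : G;
  gact : G -> X -> X;
  gmulA : forall a b c, gmul a (gmul b c) = gmul (gmul a b) c;
  gmul1g : forall a, gmul gone a = a;
  gmulVg : forall a, gmul (ginv a) a = gone;
  gact1 : forall x, gact gone x = x;
  gactM : forall a b x, gact (gmul a b) x = gact a (gact b x)
}.

Definition subgroup (G X : Type) (A : group_action G X) (S : set G) : Prop :=
  S (gone A) /\ (forall a b, S a -> S b -> S (gmul A a b)) /\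
  (forall a, S a -> S (ginv A a)).

Definition Tg (G X : Type) (R : realType) (A : group_action G X) (g : G)
  (f : X -> R) : X -> R := fun x => f (gact A (ginv A g) x).

Section Graphs.
Variables (R : realType) (X : countType).

(* sum over X of a real family (meaningful for absolutely summable families):
   sum of positive parts minus sum of negative parts *)
Definition xsum (a : X -> R) : R :=
  fine (\esum_(y in [set: X]) (Num.max (a y) 0)%:E) -
  fine (\esum_(y in [set: X]) (Num.max (- a y) 0)%:E).

Definition is_graph (b : X -> X -> R) (c : X -> R) : Prop :=
  (forall x y, 0 <= b x y) /\
  (forall x, summable [set: X] (fun y => (b x y)%:E)).

Definition connected_graph (b : X -> X -> R) : Prop :=
  forall x z, exists s : seq X, path (fun u v => 0 < b u v) x s /\ last x s = z.

Definition DomH (b : X -> X -> R) (f : X -> R) : Prop :=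
  forall x, summable [set: X] (fun y => (b x y * `|f y|)%:E).

Definition Hop (b : X -> X -> R) (c : X -> R) (f : X -> R) : X -> R :=
  fun x => xsum (fun y => b x y * (f x - f y)) + c x * f x.

Definition Splus (b : X -> X -> R) (c : X -> R) (f : X -> R) : Prop :=
  (forall x, 0 <= f x) /\ (exists x, f x != 0) /\ DomH b f /\
  (forall x, 0 <= Hop b c f x).

End Graphs.

Definition H_invariant (G : Type) (R : realType) (X : countType)
  (A : group_action G X) (S : set G) (b : X -> X -> R) (c : X -> R) : Prop :=
  forall g, S g ->
    (forall f, DomH b f -> DomH b (Tg A g f)) /\
    (forall f, DomH b f -> forall x, Hop b c (Tg A g f) x = Tg A g (Hop b c f) x).

From HB Require Import structures.
From mathcomp Require Import all_boot all_order all_algebra.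
From mathcomp Require Import all_classical all_reals all_analysis.
From mathcomp Require Import lra.
Import Order.TTheory GRing.Theory Num.Theory.
Local Open Scope classical_set_scope.
Local Open Scope ring_scope.

(* Local Harnack inequality: for f >= 0 the positive part of the sum defining
   Hf(u) is at most f(u) deg(u), while its negative part dominates the single
   term b(u,v) (f(v) - f(u)); so Hf(u) >= 0 gives b(u,v) f(v) <= K_u f(u) with
   K_u independent of f.  Chaining this along a path from x to y yields
   f(y) <= C f(x) for every nonnegative supersolution f.  Since H commutes with
   T_g for g in R, T_g maps supersolutions to supersolutions, so the same C
   works for all T_g f. *)

Lemma ge0_fine_le (R : realType) (x : \bar R) (r : R) :
  (0 <= x)%E -> (x <= r%:E)%E -> fine x <= r.
Proof. by case: x => [s | |] //=; rewrite lee_fin. Qed.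

Lemma esumZl_le {R : realType} {T : choiceType} (k : R) (a : T -> \bar R) :
  0 <= k -> (forall i, 0 <= a i)%E ->
  (\esum_(i in [set: T]) (k%:E * a i) <= k%:E * \esum_(i in [set: T]) a i)%E.
Proof.
move=> k0 a0; rewrite ge_ereal_sup => //= _ [F [finF _] <-].
rewrite -ge0_mule_fsumr //; apply: lee_wpmul2l; first by rewrite lee_fin.
by apply: esum_ge; exists F.
Qed.

Section LocalHarnack.
Variables (R : realType) (X : countType) (b : X -> X -> R) (c : X -> R).
Hypothesis graph_bc : is_graph b c.

Definition supersolution (f : X -> R) : Prop :=
  (forall x, 0 <= f x) /\ DomH b f /\ (forall x, 0 <= Hop b c f x).

Definition degree (u : X) : R := fine (\esum_(y in [set: X]) (b u y)%:E).

Lemma esum_degree (u : X) : \esum_(y in [set: X]) (b u y)%:E = (degree u)%:E.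
Proof.
have [b0 bs] := graph_bc.
rewrite /degree fineK // -(eq_esum (a := fun y => `|(b u y)%:E|%E)) //.
  by rewrite -summableE.
by move=> y _; rewrite gee0_abs // lee_fin.
Qed.

Lemma Hop_pos_part_le (f : X -> R) (u : X) : (forall x, 0 <= f x) ->
  fine (\esum_(y in [set: X]) (Num.max (b u y * (f u - f y)) 0)%:E)
    <= f u * degree u.
Proof.
have [b0 _] := graph_bc; move=> f0.
apply: ge0_fine_le; first by apply: esum_ge0 => y _; rewrite lee_fin le_max lexx orbT.
rewrite EFinM -esum_degree; apply: le_trans _ (esumZl_le _ _ (f0 u) _).
  apply: le_esum => y _; rewrite -EFinM lee_fin ge_max mulr_ge0 // andbT.
  by rewrite [f u * _]mulrC ler_wpM2l // lerBlDr lerDl.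
by move=> y; rewrite lee_fin.
Qed.

Lemma Hop_neg_part_ge (f : X -> R) (u v : X) : (forall x, 0 <= f x) -> DomH b f ->
  b u v * (f v - f u)
    <= fine (\esum_(y in [set: X]) (Num.max (- (b u y * (f u - f y))) 0)%:E).
Proof.
have [b0 _] := graph_bc; move=> f0 fD.
set N := (\esum_(y in _) _)%E.
have N0 : (0 <= N)%E by apply: esum_ge0 => y _; rewrite lee_fin le_max lexx orbT.
have finN : N \is a fin_num.
  rewrite ge0_fin_numE //; apply: le_lt_trans (fD u); apply: le_esum => y _.
  rewrite gee0_abs ?lee_fin ?mulr_ge0 // ge_max mulr_ge0 // andbT.
  by rewrite ger0_norm // -mulrN opprB ler_wpM2l // lerBlDr lerDl.
rewrite -lee_fin fineK //; apply: esum_ge; exists [set v]; first by split.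
by rewrite fsbig_set1 lee_fin le_max -mulrN opprB lexx.
Qed.

Lemma supersolution_edge (f : X -> R) (u v : X) : supersolution f ->
  b u v * f v <= (degree u + b u v + c u) * f u.
Proof.
move=> [f0 [fD fH]].
have Hu := fH u; rewrite /Hop /xsum in Hu.
have := Hop_pos_part_le f u f0; have := Hop_neg_part_ge f u v f0 fD.
by nra.
Qed.

Lemma supersolution_path (s : seq X) (u : X) :
  path (fun u v => 0 < b u v) u s ->
  exists C : R, 0 < C /\ forall f, supersolution f -> C * f (last u s) <= f u.
Proof.
elim: s u => [|v s IH] u /=.
  by move=> _; exists 1; split=> // f _; rewrite mul1r.
move=> /andP[buv /IH [C [C0 HC]]].
pose M := Num.max (degree u + b u v + c u) 1.
have M0 : 0 < M by rewrite lt_max ltr01 orbT.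
exists (b u v / M * C); split; first by rewrite !mulr_gt0 // invr_gt0.
move=> f fS; have [f0 _] := fS.
have edge_M : b u v * f v <= M * f u.
  by apply: le_trans (supersolution_edge _ u v fS) _; rewrite ler_wpM2r // le_max lexx.
have edge_v : b u v / M * f v <= f u by rewrite mulrAC ler_pdivrMr // [f u * _]mulrC.
apply: le_trans edge_v; rewrite -mulrA ler_wpM2l ?HC //.
by rewrite mulr_ge0 // ltW // invr_gt0.
Qed.

End LocalHarnack.

Arguments supersolution {R X}.
Arguments supersolution_path {R X b c} graph_bc {s u}.

Lemma supersolution_Tg {R : realType} {G : Type} {X : countType}
  {A : group_action G X} {S : set G} {b : X -> X -> R} {c : X -> R} {g : G} :
  H_invariant A S b c -> S g ->
  forall f, supersolution b c f -> supersolution b c (Tg A g f).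
Proof.
move=> inv Sg f [f0 [fD fH]]; have [TgD TgH] := inv g Sg.
split; first by move=> x; apply: f0.
by split=> [|x]; [exact: TgD | rewrite TgH //; apply: fH].
Qed.

Theorem lemma2 (R : realType) (G : Type) (X : countType)
  (A : group_action G X) (S : set G) (b : X -> X -> R) (c : X -> R) :
  subgroup A S -> is_graph b c -> connected_graph b ->
  H_invariant A S b c ->
  forall x y : X, exists C : R, 0 < C /\
    forall f : X -> R, Splus b c f -> forall g, S g ->
      Tg A g f x >= C * Tg A g f y.
Proof.
move=> _ graph_bc conn inv x y.
have [s [xs_path <-]] := conn x y.
have [C [C0 HC]] := supersolution_path graph_bc xs_path.
exists C; split=> // f [f0 [_ [fD fH]]] g Sg.
by apply: HC; apply: (supersolution_Tg inv Sg).
Qed.
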